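(* Let $R$ be a ring with identity. The following are equivalent: (1) $R$ is semisimple; (2) $\mathbb{CFM}_\Lambda(R)$ is SSP for a countably infinite set $\Lambda$; (3) $\mathbb{CFM}_\Lambda(R)$ is SSP for some infinite set $\Lambda$; (4) $\mathbb{CFM}_\Lambda(R)$ is SSP for every infinite set $\Lambda$.
   Context: Rings are associative with identity. For an infinite set $\Lambda$, $\mathbb{CFM}_\Lambda(R)$ denotes the ring of column finite $\Lambda\times\Lambda$ matrices over $R$ (matrices with entries in $R$, rows and columns indexed by $\Lambda$, each column having only finitely many nonzero entries), with the usual matrix operations. A ring $S$ is right SSP if the sum of any two direct summands of $S_S$ is again a direct summand of $S_S$; left SSP analogously with ${}_SS$; $S$ is SSP if it is both right and left SSP. *)

From HB Require Import structures.
From mathcomp Require Import all_boot all_order all_algebra.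
From mathcomp Require Import boolp classical_sets functions cardinality fsbigop.
Set Implicit Arguments. Unset Strict Implicit. Unset Printing Implicit Defensive.
Import Order.TTheory GRing.Theory.
Local Open Scope classical_set_scope.
Local Open Scope ring_scope.

Section GenericRing.
Variables (T : Type) (S : set T) (add : T -> T -> T) (opp : T -> T)
  (zero : T) (mul : T -> T -> T).

Definition additive_subgroup (I : set T) : Prop :=
  [/\ I `<=` S, I zero,
      (forall a b, I a -> I b -> I (add a b)) &
      (forall a, I a -> I (opp a))].

Definition right_ideal (I : set T) : Prop :=
  additive_subgroup I /\ (forall a s, I a -> S s -> I (mul a s)).

Definition left_ideal (I : set T) : Prop :=
  additive_subgroup I /\ (forall a s, I a -> S s -> I (mul s a)).

Definition set_sum (A B : set T) : set T :=
  [set x | exists a b, [/\ A a, B b & x = add a b]].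

Definition direct_summand (isSub : set T -> Prop) (I : set T) : Prop :=
  isSub I /\ exists J, [/\ isSub J, I `&` J = [set zero] & set_sum I J = S].

Definition direct_summand_r := direct_summand right_ideal.
Definition direct_summand_l := direct_summand left_ideal.

Definition right_SSP : Prop :=
  forall A B, direct_summand_r A -> direct_summand_r B ->
    direct_summand_r (set_sum A B).

Definition left_SSP : Prop :=
  forall A B, direct_summand_l A -> direct_summand_l B ->
    direct_summand_l (set_sum A B).

Definition SSP : Prop := right_SSP /\ left_SSP.

Definition right_semisimple : Prop :=
  forall I, right_ideal I -> direct_summand_r I.

End GenericRing.

Definition semisimple_ring (R : pzRingType) : Prop :=
  right_semisimple [set: R] +%R (fun x => - x) 0 *%R.

Section CFM.
Variables (Lambda : choiceType) (R : pzRingType).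

Definition mx_type := Lambda -> Lambda -> R.

Definition column_finite (M : mx_type) : Prop :=
  forall j, finite_set [set i | M i j != 0].

Definition CFM : set mx_type := [set M | column_finite M].

Definition mx_add (M N : mx_type) : mx_type := fun i j => M i j + N i j.
Definition mx_opp (M : mx_type) : mx_type := fun i j => - M i j.
Definition mx_zero : mx_type := fun _ _ => 0.
(* (MN)_{ij} = sum_k M_{ik} N_{kj}; the sum has finite support when N is
   column finite (fsbig sums over the finite nonzero support). *)
Definition mx_mul (M N : mx_type) : mx_type :=
  fun i j => \sum_(k \in [set: Lambda]) M i k * N k j.

Definition CFM_SSP : Prop := SSP CFM mx_add mx_opp mx_zero mx_mul.

End CFM.

From HB Require Import structures.
From mathcomp Require Import all_boot all_order all_algebra.
From mathcomp Require Import boolp classical_sets functions cardinality fsbigop.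
From mathcomp Require Import finmap.
Set Implicit Arguments. Unset Strict Implicit. Unset Printing Implicit Defensive.
Import Order.TTheory GRing.Theory.
Local Open Scope classical_set_scope.
Local Open Scope ring_scope.

(* If R is semisimple, every submodule of the free module R^(Λ) has a
   complement; complementing the image of a column finite matrix a gives b
   with aba = a, so CFM_Λ(R) is von Neumann regular.  In a regular ring a sum
   eS + fS of summands is eS ⊕ (1 - e)fS = qS for an idempotent q, so it is a
   summand; left ideals are handled by the opposite ring.

   Conversely, let CFM_Λ(R) be right SSP.  For a row x with x_u = 0, the
   identity matrices with row u replaced by 0, resp. by x, are idempotents; the
   (u, u) entries of a complement of the sum of the two summands they generate
   form a complement of the right ideal xR^(Λ) generated by the entries of x.
   So every such ideal is a summand eR, hence finitely generated.  Given a right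
   ideal I, pick y_n ∈ I outside the ideal P_n generated by y_0, ..., y_(n-1)
   and list the y_n in x (Λ is infinite): e lies in some P_m, so y_m ∈ P_m,
   which forces I = P_m = xR^(Λ), a summand. *)

(** * Rings carried by a subset *)

(* The ring axioms hold only on [carrier]: this is how [CFM_Λ(R)] sits inside
   the type of all [Λ × Λ] matrices. *)
Record setRing (T : Type) := SetRing {
  carrier : set T;
  sadd : T -> T -> T; sopp : T -> T; szero : T; smul : T -> T -> T; sone : T;
  sadd_closed : forall a b, carrier a -> carrier b -> carrier (sadd a b);
  sopp_closed : forall a, carrier a -> carrier (sopp a);
  szero_closed : carrier szero;
  smul_closed : forall a b, carrier a -> carrier b -> carrier (smul a b);
  sone_closed : carrier sone;
  saddrA : forall a b c, carrier a -> carrier b -> carrier c ->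
    sadd a (sadd b c) = sadd (sadd a b) c;
  saddrC : forall a b, carrier a -> carrier b -> sadd a b = sadd b a;
  sadd0r : forall a, carrier a -> sadd szero a = a;
  saddrN : forall a, carrier a -> sadd a (sopp a) = szero;
  smulrA : forall a b c, carrier a -> carrier b -> carrier c ->
    smul a (smul b c) = smul (smul a b) c;
  smul1r : forall a, carrier a -> smul sone a = a;
  smulr1 : forall a, carrier a -> smul a sone = a;
  smulrDl : forall a b c, carrier a -> carrier b -> carrier c ->
    smul (sadd a b) c = sadd (smul a c) (smul b c);
  smulrDr : forall a b c, carrier a -> carrier b -> carrier c ->
    smul a (sadd b c) = sadd (smul a b) (smul a c)
}.

Ltac solve_carrier := repeat first [ assumption | apply: sone_closed
  | apply: szero_closed | apply: sadd_closed | apply: sopp_closed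
  | apply: smul_closed ].

Ltac srewrite L := rewrite L; try solve [solve_carrier].

Section SetRingTheory.
Variables (T : Type) (A : setRing T).
Local Notation S := (carrier A).
Implicit Types a b c e f g : T.

Lemma saddr0 a : S a -> sadd A a (szero A) = a.
Proof. by move=> Sa; srewrite saddrC; srewrite sadd0r. Qed.

Lemma saddNr a : S a -> sadd A (sopp A a) a = szero A.
Proof. by move=> Sa; srewrite saddrC; srewrite saddrN. Qed.

Lemma saddrI a b c : S a -> S b -> S c -> sadd A a b = sadd A a c -> b = c.
Proof.
move=> Sa Sb Sc E.
rewrite -(sadd0r Sb) -(sadd0r Sc) -(saddNr Sa) -!saddrA; try solve [solve_carrier].
by rewrite E.
Qed.

Lemma saddr_eq0 a b : S a -> S b -> sadd A a b = szero A -> b = sopp A a.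
Proof.
move=> Sa Sb E; apply: (@saddrI a) => //; first by solve_carrier.
by rewrite E saddrN.
Qed.

Lemma smulr0 a : S a -> smul A a (szero A) = szero A.
Proof.
move=> Sa; apply/esym/(@saddrI (smul A a (szero A))); try solve [solve_carrier].
by rewrite -smulrDr ?sadd0r ?saddr0; solve_carrier.
Qed.

Lemma smul0r a : S a -> smul A (szero A) a = szero A.
Proof.
move=> Sa; apply/esym/(@saddrI (smul A (szero A) a)); try solve [solve_carrier].
by rewrite -smulrDl ?sadd0r ?saddr0; solve_carrier.
Qed.

Lemma soppr0 : sopp A (szero A) = szero A.
Proof. by apply/esym/saddr_eq0; rewrite ?sadd0r; solve_carrier. Qed.

Lemma smulrN a b : S a -> S b -> smul A a (sopp A b) = sopp A (smul A a b).
Proof.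
move=> Sa Sb; apply: saddr_eq0; try solve [solve_carrier].
by rewrite -smulrDr ?saddrN ?smulr0; solve_carrier.
Qed.

Lemma smulNr a b : S a -> S b -> smul A (sopp A a) b = sopp A (smul A a b).
Proof.
move=> Sa Sb; apply: saddr_eq0; try solve [solve_carrier].
by rewrite -smulrDl ?saddrN ?smul0r; solve_carrier.
Qed.

Definition sright_ideal := right_ideal S (sadd A) (sopp A) (szero A) (smul A).
Definition sdirect_summand_r :=
  direct_summand_r S (sadd A) (sopp A) (szero A) (smul A).
Definition sright_SSP := right_SSP S (sadd A) (sopp A) (szero A) (smul A).
Definition sregular := forall a, S a -> exists2 b, S b & smul A (smul A a b) a = a.

(* For an idempotent [g] this is the principal right ideal [gA]. *)
Definition sfix g := [set x | S x /\ smul A g x = x].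

Lemma sfix_direct_summand g : S g -> smul A g g = g -> sdirect_summand_r (sfix g).
Proof.
move=> Sg gg; split.
  split; first split.
  - by move=> x [].
  - by split; [solve_carrier | rewrite smulr0].
  - move=> a b [Sa ga] [Sb gb]; split; first by solve_carrier.
    by srewrite smulrDr; rewrite ga gb.
  - by move=> a [Sa ga]; split; [solve_carrier | srewrite smulrN; rewrite ga].
  - by move=> a s [Sa ga] Ss; split; [solve_carrier | srewrite smulrA; rewrite ga].
exists [set x | S x /\ smul A g x = szero A]; split.
- split; first split.
  + by move=> x [].
  + by split; [solve_carrier | rewrite smulr0].
  + move=> a b [Sa ga] [Sb gb]; split; first by solve_carrier.
    by srewrite smulrDr; rewrite ga gb sadd0r //; solve_carrier.
  + by move=> a [Sa ga]; split; [solve_carrier | srewrite smulrN; rewrite ga soppr0].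
  + by move=> a s [Sa ga] Ss; split; [solve_carrier | srewrite smulrA; rewrite ga smul0r].
- apply/seteqP; split => x /=; first by move=> [[Sx ->] [_ ->]].
  by move=> ->; split; split; try solve_carrier; rewrite smulr0.
- apply/seteqP; split => x /=; first by move=> [a [b [[Sa _] [Sb _] ->]]]; solve_carrier.
  move=> Sx; exists (smul A g x), (sadd A x (sopp A (smul A g x))); split.
  + by split; [solve_carrier | srewrite smulrA; rewrite gg].
  + split; first by solve_carrier.
    by srewrite smulrDr; srewrite smulrN; srewrite smulrA; rewrite gg; srewrite saddrN.
  + by srewrite (@saddrC _ A x); srewrite saddrA; srewrite saddrN; srewrite sadd0r.
Qed.

(* Writing [1 = e + j] along [I ⊕ J], the component [e] is a left unit of [I]. *)
Lemma direct_summand_rP I : sdirect_summand_r I ->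
  exists e, [/\ S e, smul A e e = e & I = sfix e].
Proof.
move=> [[[IS I0 Iadd Iopp] Imul] [J [[[JS J0 Jadd Jopp] Jmul] IJ IJS]]].
have : set_sum (sadd A) I J (sone A) by rewrite IJS; solve_carrier.
move=> [e [j [Ie Jj E1]]].
have [Se Sj] := (IS _ Ie, JS _ Jj).
have eI x : I x -> smul A e x = x.
  move=> Ix; have Sx := IS _ Ix.
  have Ex : x = sadd A (smul A e x) (smul A j x) by rewrite -smulrDl // -E1 smul1r.
  have Ijx : I (smul A j x).
    have -> : smul A j x = sadd A (sopp A (smul A e x)) x.
      by rewrite {3}Ex; srewrite saddrA; srewrite saddNr; srewrite sadd0r.
    by apply: Iadd => //; apply: Iopp; apply: Imul.
  have : (I `&` J) (smul A j x) by split => //; apply: Jmul.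
  by rewrite IJ => /= jx0; rewrite {2}Ex jx0 saddr0 //; solve_carrier.
exists e; split => //; first exact: eI.
apply/seteqP; split=> [x Ix | x [Sx <-]]; last exact: Imul.
by split; [exact: IS | exact: eI].
Qed.


Section IdempotentSum.
Variables e f b : T.
Hypotheses (Se : S e) (Sf : S f) (Sb : S b).
Hypotheses (ee : smul A e e = e) (ff : smul A f f = f).
Let h := sadd A f (sopp A (smul A e f)).
Hypothesis hbh : smul A (smul A h b) h = h.
Let p := smul A h b.
Let u := sadd A (sone A) (sopp A e).
Let q := sadd A e (smul A p u).

Lemma idem_sum_carrier : [/\ S h, S p, S u & S q].
Proof. by rewrite /q /p /u /h; split; solve_carrier. Qed.

Lemma idem_sum_uE x : S x -> smul A u x = sadd A x (sopp A (smul A e x)).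
Proof. by move=> Sx; rewrite /u; srewrite smulrDl; srewrite smul1r; srewrite smulNr. Qed.

(* [eA + fA = eA ⊕ hA] with [h = (1 - e) f], and [hA = pA] for the idempotent
   [p = hb]; since [ep = 0], the sum is [qA] with [q = e + p (1 - e)]. *)
Lemma idem_sum_fixes :
  [/\ smul A q q = q, smul A q e = e & smul A q f = f].
Proof.
have [Sh Sp Su Sq] := idem_sum_carrier.
have eh : smul A e h = szero A.
  by rewrite /h; srewrite smulrDr; srewrite smulrN; srewrite smulrA; rewrite ee; srewrite saddrN.
have ep : smul A e p = szero A by rewrite /p; srewrite smulrA; rewrite eh smul0r.
have pp : smul A p p = p by rewrite /p; srewrite smulrA; rewrite hbh.
have eq : smul A e q = e.
  by rewrite /q; srewrite smulrDr; srewrite smulrA; rewrite ee ep smul0r // saddr0.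
have uq : smul A u q = smul A p u.
  rewrite idem_sum_uE // eq /q; srewrite (@saddrC _ A e).
  by rewrite -saddrA; try solve [solve_carrier]; srewrite saddrN; srewrite saddr0.
split.
- rewrite {1}/q; srewrite smulrDl; rewrite eq -(@smulrA _ A p); try solve [solve_carrier].
  by rewrite uq; srewrite smulrA; rewrite pp.
- rewrite /q; srewrite smulrDl; rewrite ee -(@smulrA _ A p); try solve [solve_carrier].
  by rewrite idem_sum_uE // ee saddrN // smulr0 // saddr0.
- rewrite /q; srewrite smulrDl; rewrite -(@smulrA _ A p); try solve [solve_carrier].
  rewrite idem_sum_uE // -/h /p hbh /h; srewrite saddrA.
  srewrite (@saddrC _ A (smul A e f)); rewrite -saddrA; try solve [solve_carrier].
  by srewrite saddrN; srewrite saddr0.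
Qed.

Lemma sfix_add_idem : [/\ S q, smul A q q = q &
  set_sum (sadd A) (sfix e) (sfix f) = sfix q].
Proof.
have [Sh Sp Su Sq] := idem_sum_carrier.
have [qq qe qf] := idem_sum_fixes.
split => //; apply/seteqP; split => x /=.
  move=> [a [k [[Sa ea] [Sk fk] ->]]]; split; first by solve_carrier.
  by srewrite smulrDr; rewrite -ea -fk; srewrite smulrA; srewrite (@smulrA _ A q);
    rewrite qe qf.
move=> [Sx qx]; pose t := smul A b (smul A u x).
have St : S t by rewrite /t; solve_carrier.
have Ex : x = sadd A (smul A e x) (smul A h t).
  rewrite -{1}qx /q; srewrite smulrDl; congr (sadd A _ _).
  by rewrite /t /p; srewrite smulrA; srewrite smulrA.
exists (smul A e (sadd A x (sopp A (smul A f t)))), (smul A f t); split.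
- by split; [solve_carrier | srewrite smulrA; rewrite ee].
- by split; [solve_carrier | srewrite smulrA; rewrite ff].
rewrite {1}Ex /h; srewrite smulrDl; srewrite smulrDr; srewrite smulNr; srewrite smulrN.
rewrite -smulrA -?saddrA; try solve [solve_carrier].
by srewrite (@saddrC _ A (smul A f t)).
Qed.

End IdempotentSum.

Lemma sregular_right_SSP : sregular -> sright_SSP.
Proof.
move=> reg I K /direct_summand_rP [e [Se ee ->]] /direct_summand_rP [f [Sf ff ->]].
pose h := sadd A f (sopp A (smul A e f)).
have [b Sb hbh] : exists2 b, S b & smul A (smul A h b) h = h.
  by apply: reg; rewrite /h; solve_carrier.
have [Sq qq ->] := sfix_add_idem Se Sf Sb ee ff hbh.
exact: sfix_direct_summand.
Qed.

End SetRingTheory.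

Definition sopposite T (A : setRing T) : setRing T.
Proof.
refine (@SetRing T (carrier A) (sadd A) (sopp A) (szero A)
  (fun a b => smul A b a) (sone A) (@sadd_closed _ A) (@sopp_closed _ A)
  (@szero_closed _ A) (fun a b Sa Sb => @smul_closed _ A b a Sb Sa)
  (@sone_closed _ A) (@saddrA _ A) (@saddrC _ A) (@sadd0r _ A) (@saddrN _ A) _
  (@smulr1 _ A) (@smul1r _ A) _ _).
- by move=> a b c Sa Sb Sc /=; rewrite smulrA.
- by move=> a b c Sa Sb Sc /=; rewrite smulrDr.
- by move=> a b c Sa Sb Sc /=; rewrite smulrDl.
Defined.

Definition full_setRing (R : pzRingType) : setRing R.
Proof.
refine (@SetRing R [set: R] +%R (fun r => - r) 0 *%R 1 _ _ _ _ _ _ _ _ _ _ _ _ _ _) => //.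
- by move=> a b c _ _ _; rewrite addrA.
- by move=> a b _ _; rewrite addrC.
- by move=> a _; rewrite add0r.
- by move=> a _; rewrite subrr.
- by move=> a b c _ _ _; rewrite mulrA.
- by move=> a _; rewrite mul1r.
- by move=> a _; rewrite mulr1.
- by move=> a b c _ _ _; rewrite mulrDl.
- by move=> a b c _ _ _; rewrite mulrDr.
Defined.

(* Left ideals of [A] are the right ideals of its opposite ring. *)
Lemma sregular_SSP T (A : setRing T) :
  sregular A -> SSP (carrier A) (sadd A) (sopp A) (szero A) (smul A).
Proof.
move=> reg; split; first exact: sregular_right_SSP.
apply: (@sregular_right_SSP _ (sopposite A)) => a Sa.
by have [b Sb E] := reg a Sa; exists b => //=; rewrite smulrA.
Qed.

(** * Finitely supported vectors and column finite matrices *)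

Section FiniteSupport.
Variables (L : choiceType) (R : pzRingType).
Implicit Types (v w x y : L -> R) (M N : mx_type L R).

Definition fin_supp v := finite_set [set i | v i != 0].
Definition vscale v (r : R) : L -> R := fun i => v i * r.
Definition vdelta (l : L) (r : R) : L -> R := fun i => if i == l then r else 0.

Lemma fin_supp_sub v w : fin_supp w -> (forall i, w i = 0 -> v i = 0) -> fin_supp v.
Proof.
move=> fw vw; apply: sub_finite_set fw => i /= /eqP vi; apply/eqP => wi.
exact: vi (vw i wi).
Qed.

Lemma fin_supp0 : fin_supp (0 : L -> R).
Proof. by apply: (sub_finite_set (B := set0)) => // i /=; rewrite eqxx. Qed.

Lemma supp_add v w :
  [set i | (v + w) i != 0] `<=` [set i | v i != 0] `|` [set i | w i != 0].
Proof.
move=> i /= vwi; apply: contrapT => /not_orP [/negP/negPn/eqP vi /negP/negPn/eqP wi].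
by move: vwi; rewrite addrfctE /= vi wi addr0 eqxx.
Qed.

Lemma fin_suppD v w : fin_supp v -> fin_supp w -> fin_supp (v + w).
Proof.
by move=> fv fw; apply: sub_finite_set (@supp_add v w) _; rewrite finite_setU.
Qed.

Lemma fin_suppN v : fin_supp v -> fin_supp (- v).
Proof. by move=> fv; apply: (fin_supp_sub fv) => i vi; rewrite opprfctE /= vi oppr0. Qed.

Lemma fin_suppZ v r : fin_supp v -> fin_supp (vscale v r).
Proof. by move=> fv; apply: (fin_supp_sub fv) => i vi; rewrite /vscale vi mul0r. Qed.

Lemma fin_supp_delta l r : fin_supp (vdelta l r).
Proof.
apply: (sub_finite_set (B := [set l])) => [i|]; last exact: finite_set1.
by rewrite /vdelta /=; case: (i =P l) => // _; rewrite eqxx.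
Qed.

Lemma vscaleN1 v : vscale v (-1) = - v.
Proof. by apply/funext => i; rewrite /vscale mulrN1. Qed.

Lemma fsumT_fset (X : set L) (F : L -> R) : finite_set X ->
  (forall k, ~ X k -> F k = 0) -> \sum_(k \in [set: L]) F k = \sum_(k <- fset_set X) F k.
Proof.
move=> fX F0; apply: fsbigTE => k; rewrite in_fset_set // notin_setE.
exact: F0.
Qed.

Lemma fsumT1 (F : L -> R) j :
  (forall k, k != j -> F k = 0) -> \sum_(k \in [set: L]) F k = F j.
Proof.
move=> F0; rewrite -(fsbig_widen [set j]) ?fsbig_set1 //.
by move=> k [_ /eqP kj]; apply: F0.
Qed.

(* Only [v] needs finite support for the sum to be meaningful. *)
Definition dotv x v := \sum_(k \in [set: L]) x k * v k.

Lemma dotvE (X : set L) x v : finite_set X -> [set k | v k != 0] `<=` X ->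
  dotv x v = \sum_(k <- fset_set X) x k * v k.
Proof.
move=> fX vX; apply: fsumT_fset => // k Xk.
suff -> : v k = 0 by rewrite mulr0.
by apply/eqP; apply: contrapT => /negP /vX.
Qed.

Lemma dotv0r x : dotv x 0 = 0.
Proof. by rewrite /dotv fsbig1 // => k _; rewrite mulr0. Qed.

Lemma dotvDr x v w : fin_supp v -> fin_supp w ->
  dotv x (v + w) = dotv x v + dotv x w.
Proof.
move=> fv fw.
set X := [set k | v k != 0] `|` [set k | w k != 0].
have fX : finite_set X by rewrite finite_setU.
have [vX wX] : [set k | v k != 0] `<=` X /\ [set k | w k != 0] `<=` X.
  by split=> k; [left | right].
rewrite (dotvE _ fX (@supp_add v w)) (dotvE _ fX vX) (dotvE _ fX wX).
by rewrite -big_split; apply: eq_bigr => k _; rewrite mulrDr.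
Qed.

Lemma dotvZr x v r : fin_supp v -> dotv x (vscale v r) = dotv x v * r.
Proof.
move=> fv; have vX : [set k | vscale v r k != 0] `<=` [set k | v k != 0].
  by move=> k /=; apply: contraNN => /eqP; rewrite /vscale => ->; rewrite mul0r.
rewrite !(dotvE x fv) // mulr_suml.
by apply: eq_bigr => k _; rewrite mulrA.
Qed.

Lemma dotvNr x v : fin_supp v -> dotv x (- v) = - dotv x v.
Proof. by move=> fv; rewrite -vscaleN1 dotvZr // mulrN1. Qed.

Lemma dotvDl x y v : fin_supp v -> dotv (x + y) v = dotv x v + dotv y v.
Proof.
move=> fv; rewrite !(dotvE _ fv) // -big_split.
by apply: eq_bigr => k _; rewrite mulrDl.
Qed.

Lemma dotvNl x v : fin_supp v -> dotv (- x) v = - dotv x v.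
Proof.
move=> fv; rewrite !(dotvE _ fv) // -sumrN.
by apply: eq_bigr => k _; rewrite mulNr.
Qed.

Lemma dotv_delta x l r : dotv x (vdelta l r) = x l * r.
Proof.
rewrite /dotv (@fsumT1 _ l) /vdelta ?eqxx // => k /negbTE ->.
by rewrite mulr0.
Qed.

Definition mx_app M v : L -> R := fun i => dotv (M i) v.

Lemma mx_mulE M N i j : mx_mul M N i j = dotv (M i) (N^~ j).
Proof. by []. Qed.

Lemma fin_supp_mx_app M v : column_finite M -> fin_supp v -> fin_supp (mx_app M v).
Proof.
move=> cM fv.
apply: (sub_finite_set (B := \bigcup_(k in [set k | v k != 0]) [set i | M i k != 0])).
  move=> i /= Mvi; apply: contrapT => H; move/negP: Mvi; apply; apply/eqP.
  rewrite /mx_app /dotv fsbig1 // => k _.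
  have [->|vk] := eqVneq (v k) 0; first by rewrite mulr0.
  have [->|Mik] := eqVneq (M i k) 0; first by rewrite mul0r.
  by case: H; exists k.
by apply: bigcup_finite => // k _; exact: cM.
Qed.

Lemma mx_appA M N v : column_finite N -> fin_supp v ->
  mx_app M (mx_app N v) = mx_app (mx_mul M N) v.
Proof.
move=> cN fv; apply/funext => i.
set Y := [set l | v l != 0]; set X := \bigcup_(l in Y) [set k | N k l != 0].
have fX : finite_set X by apply: bigcup_finite => // l _; exact: cN.
have NX k l : Y l -> ~ X k -> N k l = 0.
  by move=> Yl Xk; apply/eqP; apply: contrapT => /negP Nkl; apply: Xk; exists l.
have XN l : Y l -> [set k | N k l != 0] `<=` X by move=> Yl k Nkl; exists l.
rewrite /mx_app {1}/dotv (fsumT_fset fX); last first.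
  move=> k Xk; rewrite (dotvE _ fv) // big1_seq ?mulr0 // => l /andP [_].
  by rewrite in_fset_set // in_setE => /NX /(_ Xk) ->; rewrite mul0r.
rewrite (dotvE _ fv) //; under eq_bigr do rewrite (dotvE _ fv) // mulr_sumr.
rewrite exchange_big; apply: eq_big_seq => l; rewrite in_fset_set // in_setE => Yl.
rewrite mx_mulE (dotvE _ fX (XN l Yl)) mulr_suml.
by apply: eq_bigr => k _; rewrite mulrA.
Qed.

Lemma mx_appBl M N v : fin_supp v -> mx_app (M - N) v = mx_app M v - mx_app N v.
Proof.
by move=> fv; apply/funext => i; rewrite /mx_app dotvDl ?dotvNl.
Qed.

Definition mx_one : mx_type L R := fun i j => if i == j then 1 else 0.

Lemma mx_app1 v : mx_app mx_one v = v.
Proof.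
apply/funext => i; rewrite /mx_app /dotv (@fsumT1 _ i) /mx_one ?eqxx ?mul1r //.
by move=> k; rewrite eq_sym => /negbTE ->; rewrite mul0r.
Qed.

Lemma column_finite0 : column_finite (0 : mx_type L R).
Proof. by move=> j; exact: fin_supp0. Qed.

Lemma column_finite1 : column_finite mx_one.
Proof. by move=> j; exact: (fin_supp_delta j 1). Qed.

Lemma column_finiteD M N : column_finite M -> column_finite N -> column_finite (M + N).
Proof. by move=> cM cN j; exact: (fin_suppD (cM j) (cN j)). Qed.

Lemma column_finiteN M : column_finite M -> column_finite (- M).
Proof. by move=> cM j; exact: (fin_suppN (cM j)). Qed.

Lemma column_finiteM M N :
  column_finite M -> column_finite N -> column_finite (mx_mul M N).
Proof. by move=> cM cN j; exact: (fin_supp_mx_app cM (cN j)). Qed.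

Lemma mx_mulA M N P : column_finite N -> column_finite P ->
  mx_mul M (mx_mul N P) = mx_mul (mx_mul M N) P.
Proof.
move=> cN cP; apply/funext => i; apply/funext => j.
exact: (congr1 (@^~ i) (mx_appA M cN (cP j))).
Qed.

Definition CFM_ring : setRing (mx_type L R).
Proof.
refine (@SetRing _ (@CFM L R) (@mx_add L R) (@mx_opp L R) (@mx_zero L R)
  (@mx_mul L R) mx_one column_finiteD column_finiteN column_finite0
  column_finiteM column_finite1 _ _ _ _ _ _ _ _ _).
- by move=> M N P _ _ _; apply: addrA.
- by move=> M N _ _; apply: addrC.
- by move=> M _; apply: add0r.
- by move=> M _; apply: subrr.
- by move=> M N P _ cN cP; apply: mx_mulA.
- by move=> M _; apply/funext => i; apply/funext => j; exact: (congr1 (@^~ i) (mx_app1 (M^~ j))).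
- move=> M _; apply/funext => i; apply/funext => j.
  by have := dotv_delta (M i) j 1; rewrite mulr1.
- move=> M N P _ _ cP; apply/funext => i; apply/funext => j.
  exact: (dotvDl (M i) (N i) (cP j)).
- move=> M N P _ cN cP; apply/funext => i; apply/funext => j.
  exact: (dotvDr (M i) (cN j) (cP j)).
Defined.

Lemma vdeltaD l a b : vdelta l (a + b) = vdelta l a + vdelta l b.
Proof. by apply/funext => i; rewrite addrfctE /vdelta /=; case: ifP; rewrite ?addr0. Qed.

Lemma vdeltaM l a s : vdelta l (a * s) = vscale (vdelta l a) s.
Proof. by apply/funext => i; rewrite /vscale /vdelta; case: ifP; rewrite ?mul0r. Qed.

Lemma vdelta0 l : vdelta l 0 = 0.
Proof. by apply/funext => i; rewrite /vdelta; case: ifP. Qed.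

(** * Submodules of the free module [R^(Λ)] *)

Definition addscale_closed (C : set (L -> R)) :=
  [/\ C `<=` fin_supp, (forall v w, C v -> C w -> C (v + w)) &
      (forall v r, C v -> C (vscale v r))].

Definition submod (C : set (L -> R)) := addscale_closed C /\ C 0.

Definition trivial_cap (N C : set (L -> R)) := forall v, N v -> C v -> v = 0.

Lemma submodN C v : submod C -> C v -> C (- v).
Proof. by move=> [[_ _ CZ] _] Cv; rewrite -vscaleN1; apply: CZ. Qed.

Lemma mx_app_submod C X v : submod C -> (forall k, C (X^~ k)) -> fin_supp v ->
  C (mx_app X v).
Proof.
move=> [[_ CD CZ] C0] CX fv.
suff -> : mx_app X v = \sum_(k <- fset_set [set k | v k != 0]) vscale (X^~ k) (v k).
  by apply: big_ind => // k _; apply: CZ.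
by apply/funext => i; rewrite fct_sumE /mx_app (dotvE _ fv).
Qed.

Lemma submod_set_sum (U W : set (L -> R)) :
  submod U -> submod W -> submod (set_sum +%R U W).
Proof.
move=> [[UF UD UZ] U0] [[WF WD WZ] W0]; split; first split.
- by move=> _ [m [n [Um Wn ->]]]; apply: fin_suppD; [apply: UF | apply: WF].
- move=> _ _ [m [n [Um Wn ->]]] [m' [n' [Um' Wn' ->]]].
  by exists (m + m'), (n + n'); split; [apply: UD | apply: WD | rewrite addrACA].
- move=> _ r [m [n [Um Wn ->]]]; exists (vscale m r), (vscale n r).
  by split; [apply: UZ | apply: WZ | apply/funext => i; rewrite /vscale mulrDl].
- by exists 0, 0; rewrite addr0.
Qed.

Lemma right_ideal_delta_preimage (U : set (L -> R)) l : submod U ->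
  right_ideal [set: R] +%R (fun r => - r) 0 *%R [set r | U (vdelta l r)].
Proof.
move=> sU; have [[_ UD UZ] U0] := sU; split; first split => //.
- by rewrite /= vdelta0.
- by move=> a b Ua Ub; rewrite /= vdeltaD; apply: UD.
- by move=> a Ua; rewrite /= -mulrN1 vdeltaM vscaleN1; apply: submodN.
- by move=> a s Ua _; rewrite /= vdeltaM; apply: UZ.
Qed.

Lemma submod_delta_image K l : right_ideal [set: R] +%R (fun r => - r) 0 *%R K ->
  submod (vdelta l @` K).
Proof.
move=> [[_ K0 KD _] KM]; split; first split.
- by move=> _ [k _ <-]; apply: fin_supp_delta.
- by move=> _ _ [a Ka <-] [b Kb <-]; exists (a + b); [apply: KD | rewrite vdeltaD].
- by move=> _ r [a Ka <-]; exists (a * r); [apply: KM | rewrite vdeltaM].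
- by exists 0; rewrite ?vdelta0.
Qed.

Lemma submod_maximal_disjoint (N : set (L -> R)) : exists C, [/\ submod C, trivial_cap N C &
  forall C', submod C' -> trivial_cap N C' -> C `<=` C' -> C' `<=` C].
Proof.
pose P := [set C | addscale_closed C /\ trivial_cap N C].
have [C [[cC dC] maxC]] : exists C, P C /\ forall B, C `<` B -> ~ P B.
  apply: Zorn_bigcup => F FP totF; split; last first.
    by move=> v Nv [C FC Cv]; have [_ dC] := FP _ FC; exact: dC.
  split.
  - by move=> v [C FC Cv]; have [[CF _ _] _] := FP _ FC; exact: CF.
  - move=> v w [C1 F1 Cv] [C2 F2 Cw].
    have [[[_ D1 _] _] [[_ D2 _] _]] := (FP _ F1, FP _ F2).
    have [C12|C21] := totF _ _ F1 F2.
      by exists C2 => //; apply: D2 => //; apply: C12.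
    by exists C1 => //; apply: D1 => //; apply: C21.
  - by move=> v r [C FC Cv]; have [[_ _ Z] _] := FP _ FC; exists C => //; apply: Z.
have maxP B : P B -> C `<=` B -> B `<=` C.
  by move=> PB CB; apply: contrapT => BC; exact: (maxC B).
have [CF CD CZ] := cC.
have C0 : C 0.
  suff : (C `|` [set 0]) `<=` C by apply; right.
  apply: maxP; last by move=> v Cv; left.
  split; last by move=> v Nv [/(dC _ Nv) | ->].
  split.
  - by move=> v [/CF // | ->]; exact: fin_supp0.
  - move=> v w [Cv | ->] [Cw | ->]; rewrite ?addr0 ?add0r; by [left; apply: CD | left | right].
  - move=> v r [Cv | ->]; first by left; apply: CZ.
    by right; apply/funext => i; rewrite /vscale mul0r.
exists C; split => // C' [cC' _] dC'; exact: maxP.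
Qed.

(* Over a semisimple ring, a submodule [C] maximal with [N ∩ C = 0] contains
   every [e_l] modulo [N]: otherwise the ideal [I] of [r] with [e_l r ∈ N + C]
   is proper, and a complement [K] of [I] enlarges [C] to [C + e_l K]. *)
Lemma delta_in_complement_sum (N C : set (L -> R)) l : semisimple_ring R -> submod N -> submod C ->
  trivial_cap N C ->
  (forall C', submod C' -> trivial_cap N C' -> C `<=` C' -> C' `<=` C) ->
  set_sum +%R N C (vdelta l 1).
Proof.
move=> Rss sN sC dNC maxC.
set NC := set_sum +%R N C.
have sNC : submod NC by apply: submod_set_sum.
have rI := right_ideal_delta_preimage l sNC.
have [_ [K [rK IK IKR]]] := Rss _ rI.
have IK0 k : [set r | NC (vdelta l r)] k -> K k -> k = 0.
  by move=> Ik Kk; have : ([set r | NC (vdelta l r)] `&` K) k by []; rewrite IK.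
have K0 : K 0 by case: rK => -[].
have KC : vdelta l @` K `<=` C.
  suff sub : set_sum +%R C (vdelta l @` K) `<=` C.
    move=> _ [k Kk <-]; apply: sub; exists 0, (vdelta l k).
    by split; [exact: sC.2 | exists k | rewrite add0r].
  apply: maxC.
  - by apply: submod_set_sum => //; apply: submod_delta_image.
  - move=> v Nv [c [_ [Cc [k Kk <-] Ev]]]; subst v.
    have Ik : NC (vdelta l k).
      by exists (c + vdelta l k), (- c); split; [|apply: submodN|rewrite addrC addKr].
    by move: Nv; rewrite (IK0 k Ik Kk) vdelta0 !addr0 => Nc; apply: dNC.
  - move=> c Cc; exists c, 0; split => //; last by rewrite addr0.
    by exists 0; rewrite ?vdelta0.
have : set_sum +%R [set r | NC (vdelta l r)] K 1 by rewrite IKR.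
move=> [i [k [Ii Kk E1]]].
have Ik : NC (vdelta l k).
  by exists 0, (vdelta l k); split; [exact: sN.2 | apply: KC; exists k | rewrite add0r].
by move: Ii; rewrite /= E1 (IK0 k Ik Kk) addr0.
Qed.

Lemma CFM_regular : semisimple_ring R -> sregular CFM_ring.
Proof.
move=> Rss a ca.
pose N := [set w | exists2 v, fin_supp v & w = mx_app a v].
have sN : submod N.
  split; first split.
  - by move=> _ [v fv ->]; apply: fin_supp_mx_app.
  - move=> _ _ [v fv ->] [w fw ->]; exists (v + w); first exact: fin_suppD.
    by apply/funext => i; rewrite /mx_app dotvDr.
  - move=> _ r [v fv ->]; exists (vscale v r); first exact: fin_suppZ.
    by apply/funext => i; rewrite /mx_app dotvZr.
  - by exists 0; [exact: fin_supp0 | apply/funext => i; rewrite /mx_app dotv0r].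
have [C [sC dNC maxC]] := submod_maximal_disjoint N.
have /choice [vv Hvv] k : exists v, fin_supp v /\ C (vdelta k 1 - mx_app a v).
  have [_ [c [[v fv ->] Cc E]]] := delta_in_complement_sum k Rss sN sC dNC maxC.
  by exists v; split => //; rewrite E addrC addKr.
pose b : mx_type L R := fun l k => vv k l.
have cb : column_finite b by move=> k; exact: (Hvv k).1.
exists b => //; apply/funext => i; apply/funext => j.
have fw : fin_supp (a^~ j) := ca j.
have Nw : N (a^~ j).
  by exists (vdelta j 1); [apply: fin_supp_delta | apply/funext => k; rewrite /mx_app dotv_delta mulr1].
set s := mx_app (mx_mul a b) (a^~ j).
have Ns : N s by exists (mx_app b (a^~ j)); [apply: fin_supp_mx_app | rewrite mx_appA].
have Cws : C (a^~ j - s).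
  rewrite -[a^~ j in X in C X]mx_app1 -mx_appBl //.
  by apply: mx_app_submod => // k; exact: (Hvv k).2.
have /eqP : a^~ j - s = 0.
  apply: dNC Cws; have [[_ ND _] _] := sN.
  by apply: ND => //; apply: submodN.
by rewrite subr_eq0 => /eqP /(congr1 (@^~ i)).
Qed.

Lemma semisimple_CFM_SSP : semisimple_ring R -> CFM_SSP L R.
Proof. by move=> Rss; exact: (sregular_SSP (CFM_regular Rss)). Qed.

Lemma dotv0l v : dotv 0 v = 0.
Proof. by rewrite /dotv fsbig1 // => k _; rewrite mul0r. Qed.

(** * A direct summand of [R] from a row vector *)

Definition mx_setrow (u : L) x : mx_type L R :=
  fun i j => if i == u then x j else mx_one i j.

Definition mx_entry (u : L) (s : R) : mx_type L R :=
  fun i j => if (i == u) && (j == u) then s else 0.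

Lemma column_finite_setrow u x : column_finite (mx_setrow u x).
Proof.
move=> j; apply: (sub_finite_set (B := [set j] `|` [set u])); last first.
  by rewrite finite_setU; split; exact: finite_set1.
move=> i /=; rewrite /mx_setrow /mx_one; case: (i =P u) => [-> _ | _]; first by right.
by case: (i =P j) => [-> _ | _]; [left | rewrite eqxx].
Qed.

Lemma column_finite_entry u s : column_finite (mx_entry u s).
Proof.
move=> j; apply: (sub_finite_set (B := [set u])); last exact: finite_set1.
by move=> i /=; rewrite /mx_entry; case: (i =P u) => // _; rewrite eqxx.
Qed.

Lemma mx_mul_setrow u x M i j :
  mx_mul (mx_setrow u x) M i j = if i == u then dotv x (M^~ j) else M i j.
Proof.
rewrite mx_mulE /mx_setrow; case: (i =P u) => // _.
exact: (congr1 (@^~ i) (mx_app1 (M^~ j))).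
Qed.

Lemma mx_mul_entry M u s i j :
  mx_mul M (mx_entry u s) i j = M i u * (if j == u then s else 0).
Proof.
rewrite mx_mulE /dotv (@fsumT1 _ u) /mx_entry ?eqxx // => k /negbTE ->.
by rewrite mulr0.
Qed.

Lemma mx_setrow_idem u x : x u = 0 ->
  mx_mul (mx_setrow u x) (mx_setrow u x) = mx_setrow u x.
Proof.
move=> xu; apply/funext => i; apply/funext => j; rewrite mx_mul_setrow.
case: (i =P u) => [-> | //]; rewrite /mx_setrow eqxx.
rewrite /dotv (@fsumT1 _ j) => [|k kj]; rewrite /mx_setrow /mx_one.
  by case: (j =P u) => [-> | _]; rewrite ?xu ?mul0r ?eqxx ?mulr1.
by case: (k =P u) => [-> | _]; rewrite ?xu ?mul0r // (negbTE kj) mulr0.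
Qed.

Definition row_ideal x := [set r | exists2 c, fin_supp c & r = dotv x c].

Lemma right_ideal_row_ideal x :
  right_ideal [set: R] +%R (fun r => - r) 0 *%R (row_ideal x).
Proof.
split; first split => //.
- by exists 0; [exact: fin_supp0 | rewrite dotv0r].
- move=> _ _ [c fc ->] [d fd ->].
  by exists (c + d); [exact: fin_suppD | rewrite dotvDr].
- by move=> _ [c fc ->]; exists (- c); [exact: fin_suppN | rewrite dotvNr].
- move=> _ s [c fc ->] _.
  by exists (vscale c s); [exact: fin_suppZ | rewrite dotvZr].
Qed.

Section RowIdealSummand.
Variables (u : L) (x : L -> R) (C : set (mx_type L R)).
Hypothesis xu : x u = 0.
Let A0 := sfix CFM_ring (mx_setrow u 0).
Let Ax := sfix CFM_ring (mx_setrow u x).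
Hypotheses (rC : sright_ideal CFM_ring C)
  (capC : set_sum (@mx_add L R) A0 Ax `&` C = [set 0])
  (sumC : set_sum (@mx_add L R) (set_sum (@mx_add L R) A0 Ax) C = @CFM L R).
Let K := [set r : R | exists2 M, C M & r = M u u].

Lemma right_ideal_corner : right_ideal [set: R] +%R (fun r => - r) 0 *%R K.
Proof.
have [[_ C0 CD CN] CM] := rC; split; first split => //.
- by exists 0.
- by move=> _ _ [M CM' ->] [N CN' ->]; exists (mx_add M N) => //; apply: CD.
- by move=> _ [M CM' ->]; exists (mx_opp M) => //; apply: CN.
- move=> _ s [M CM' ->] _; exists (mx_mul M (mx_entry u s)).
    by apply: CM => //; exact: column_finite_entry.
  by rewrite mx_mul_entry eqxx.
Qed.

(* An element [dotv x c] of [K], coming from [M ∈ C], makes the column [u]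
   of [M] a sum of an element of [A0] and of [G_x Y], [Y] having column [c]. *)
Lemma row_ideal_cap_corner : row_ideal x `&` K = [set 0].
Proof.
apply/seteqP; split => [a [[c fc ->] [M CM Ea]] | _ ->] /=; last first.
  split; first by exists 0; [exact: fin_supp0 | rewrite dotv0r].
  by exists 0 => //; case: rC => -[].
have [[CS _ _ _] Cmul] := rC.
pose Mu := mx_mul M (mx_entry u 1).
have CMu : C Mu by apply: Cmul => //; exact: column_finite_entry.
pose Y : mx_type L R := fun i j => if j == u then c i else 0.
have cY : column_finite Y.
  by move=> j; apply: (fin_supp_sub fc) => i ci; rewrite /Y ci; case: ifP.
pose Q := mx_mul (mx_setrow u x) Y.
have AQ : Ax Q.
  split; first by apply: column_finiteM => //; exact: column_finite_setrow.
  by rewrite /= /Q mx_mulA ?mx_setrow_idem //; exact: column_finite_setrow.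
have A0P : A0 (Mu - Q).
  split; first by apply: column_finiteD; [exact: CS | apply: column_finiteN; case: AQ].
  apply/funext => i; apply/funext => j; rewrite /= mx_mul_setrow.
  case: (i =P u) => [-> | //]; rewrite dotv0l.
  change (0 = Mu u j - Q u j); rewrite /Mu /Q mx_mul_entry mx_mul_setrow eqxx /Y.
  by case: (j =P u) => _; rewrite ?mulr1 ?Ea ?subrr // mulr0 dotv0r subrr.
have : (set_sum (@mx_add L R) A0 Ax `&` C) Mu.
  by split => //; exists (Mu - Q), Q; split => //; apply/esym; exact: subrK.
rewrite capC => /(congr1 (fun N => N u u)).
by rewrite /Mu mx_mul_entry eqxx mulr1 -Ea.
Qed.

Lemma row_ideal_add_corner : set_sum +%R (row_ideal x) K = [set: R].
Proof.
apply/seteqP; split => // r _.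
have : set_sum (@mx_add L R) (set_sum (@mx_add L R) A0 Ax) C mx_one.
  by rewrite sumC; exact: column_finite1.
move=> [_ [m [[P0 [Px [[cP0 EP0] [cPx EPx] ->]]] Cm /(congr1 (fun N => N u u))]]].
rewrite /= /mx_one /mx_add eqxx => E1.
have P0uu : P0 u u = 0 by rewrite -EP0 /= mx_mul_setrow eqxx dotv0l.
have Pxuu : row_ideal x (Px u u).
  by exists (Px^~ u); [exact: cPx | rewrite -{1}EPx /= mx_mul_setrow eqxx].
have [_ Jmul] := right_ideal_row_ideal x.
have [_ Kmul] := right_ideal_corner.
exists (Px u u * r), (m u u * r); split; [exact: Jmul | by apply: Kmul => //; exists m |].
by rewrite -mulrDl -{1}(mul1r r) E1 P0uu add0r.
Qed.

End RowIdealSummand.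

(* Both [G_0 = mx_setrow u 0] and [G_x] are idempotent, and the [(u, u)]
   entries of a complement of [G_0 CFM + G_x CFM] complement [row_ideal x]. *)
Lemma row_ideal_direct_summand u x : x u = 0 -> sright_SSP CFM_ring ->
  direct_summand_r [set: R] +%R (fun r => - r) 0 *%R (row_ideal x).
Proof.
move=> xu ssp.
have G_summand y : y u = 0 ->
    sdirect_summand_r CFM_ring (sfix CFM_ring (mx_setrow u y)).
  by move=> yu; apply: sfix_direct_summand;
    [exact: column_finite_setrow | exact: mx_setrow_idem].
have [_ [C [rC capC sumC]]] := ssp _ _ (G_summand 0 erefl) (G_summand x xu).
split; first exact: right_ideal_row_ideal.
exists [set r : R | exists2 M, C M & r = M u u]; split.
- exact: right_ideal_corner.
- exact: row_ideal_cap_corner.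
- exact: row_ideal_add_corner.
Qed.

Lemma row_ideal_sub_bigcup x (P : nat -> set R) :
  (forall n, right_ideal [set: R] +%R (fun r => - r) 0 *%R (P n)) ->
  (forall m n, (m <= n)%N -> P m `<=` P n) -> (forall k, exists n, P n (x k)) ->
  row_ideal x `<=` \bigcup_n P n.
Proof.
move=> rP Pmono Px _ [c fc ->]; rewrite (dotvE _ fc) //.
elim: (enum_fset _) => [|k s [m _ IH]].
  by exists 0%N => //; rewrite big_nil; case: (rP 0%N) => -[].
have [n Pxk] := Px k; exists (maxn n m) => //; rewrite big_cons.
have [[_ _ PD _] PM] := rP (maxn n m).
apply: PD; last exact: (Pmono _ _ (leq_maxr n m) _ IH).
by apply: PM => //; exact: (Pmono _ _ (leq_maxl n m) _ Pxk).
Qed.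

End FiniteSupport.

(** * Ascending chains of right ideals *)

Section ChainIdeal.
Variables (R : pzRingType) (pk : set R -> R).

(* [pk A] is meant to pick an element of the target ideal outside [A]. *)
Fixpoint chain_ideal n : set R :=
  if n is m.+1 then [set z | exists a r, chain_ideal m a /\ z = a + pk (chain_ideal m) * r]
  else [set 0].

Lemma right_ideal_chain n :
  right_ideal [set: R] +%R (fun r => - r) 0 *%R (chain_ideal n).
Proof.
elim: n => [|n [[_ P0 PD PN] PM]]; split; try split => //=.
- by move=> a b -> ->; rewrite addr0.
- by move=> a ->; rewrite oppr0.
- by move=> a s -> _; rewrite mul0r.
- by exists 0, 0; rewrite mulr0 addr0.
- move=> _ _ [a [r [Pa ->]]] [b [r' [Pb ->]]].
  by exists (a + b), (r + r'); split; [apply: PD | rewrite mulrDr addrACA].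
- move=> _ [a [r [Pa ->]]]; exists (- a), (- r).
  by split; [apply: PN | rewrite opprD mulrN].
- move=> _ s [a [r [Pa ->]]] _; exists (a * s), (r * s).
  by split; [apply: PM | rewrite mulrDl mulrA].
Qed.

Lemma chain_ideal_mono m n : (m <= n)%N -> chain_ideal m `<=` chain_ideal n.
Proof.
move=> /subnK <-; elim: (n - m)%N => [|k IH] //= a Pa.
by exists a, 0; split; [exact: IH | rewrite mulr0 addr0].
Qed.

Lemma chain_ideal_pick n : chain_ideal n.+1 (pk (chain_ideal n)).
Proof.
exists 0, 1; split; last by rewrite mulr1 add0r.
by have [[]] := right_ideal_chain n.
Qed.

Lemma chain_ideal_sub (J : set R) n :
  right_ideal [set: R] +%R (fun r => - r) 0 *%R J ->
  (forall n, J (pk (chain_ideal n))) -> chain_ideal n `<=` J.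
Proof.
move=> [[_ J0 JD _] JM] Jpk; elim: n => [|n IH] /= a; first by move=> ->.
by move=> [b [r [Pb ->]]]; apply: JD; [exact: IH | exact: JM].
Qed.

Lemma chain_ideal_stationary (I : set R) n :
  right_ideal [set: R] +%R (fun r => - r) 0 *%R I ->
  (forall A, I (pk A) /\ (~ (I `<=` A) -> ~ A (pk A))) ->
  chain_ideal n (pk (chain_ideal n)) -> I = chain_ideal n.
Proof.
move=> rI pkI Pn; apply/seteqP; split; last first.
  by apply: chain_ideal_sub => // m; case: (pkI (chain_ideal m)).
by apply: contrapT => /(pkI (chain_ideal n)).2.
Qed.

End ChainIdeal.

Lemma exists_picker T (I : set T) t0 : I t0 ->
  exists pk : set T -> T, forall A, I (pk A) /\ (~ (I `<=` A) -> ~ A (pk A)).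
Proof.
move=> It0.
suff [pk pkP] : {pk : set T -> T & forall A, I (pk A) /\ (~ (I `<=` A) -> ~ A (pk A))}.
  by exists pk.
apply: (@choice _ _ (fun A r => I r /\ (~ (I `<=` A) -> ~ A r))) => A.
have [IA | nIA] := pselect (I `<=` A); first by exists t0.
have [r Ir nAr] : exists2 r, I r & ~ A r.
  apply: contrapT => H; apply: nIA => r Ir; apply: contrapT => nAr.
  by apply: H; exists r.
by exists r.
Qed.

Lemma infinite_nat_injection (L : choiceType) :
  infinite_set [set: L] -> exists f : nat -> L, injective f.
Proof.
move=> /infiniteP /card_leP [f].
pose g (n : nat) : L := \val (f (SigSub (mem_set (I : [set: nat] n)))).
exists g => m n /val_inj /(@inj _ _ _ f) H.
by have /(congr1 val) := H (mem_set I) (mem_set I).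
Qed.

Lemma row_of_sequence (L : choiceType) (R : pzRingType) (iota : nat -> L)
    (y : nat -> R) : injective iota ->
  exists x : L -> R, [/\ x (iota 0%N) = 0, forall n, x (iota n.+1) = y n &
    forall l, x l = 0 \/ exists n, x l = y n].
Proof.
move=> iota_inj.
pose x (l : L) : R := if pselect (exists n, iota n.+1 = l) is left h
  then y (projT1 (cid h)) else 0.
exists x; split.
- by rewrite /x; case: pselect => [h | //]; case: (cid h) => m /= /iota_inj.
- move=> n; rewrite /x; case: pselect => [h | nh]; last by case: nh; exists n.
  by case: (cid h) => m /= /iota_inj [->].
- by move=> l; rewrite /x; case: pselect => [h | _]; [right; eexists | left].
Qed.

(* Choosing [y_n ∈ I \ P_n] and the row [x] listing the [y_n], the summand
   [row_ideal x = eR] has [e ∈ P_m] for some [m], so [y_m ∈ P_m] and the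
   chain stops at [I = P_m = row_ideal x]. *)
Lemma CFM_right_SSP_semisimple (L : choiceType) (R : pzRingType) :
  infinite_set [set: L] -> sright_SSP (CFM_ring L R) -> semisimple_ring R.
Proof.
move=> infL ssp I rI.
have [pk pkI] : exists pk : set R -> R, forall A, I (pk A) /\ (~ (I `<=` A) -> ~ A (pk A)).
  by case: rI => -[_ I0 _ _] _; exact: exists_picker I0.
have [iota iota_inj] := infinite_nat_injection infL.
pose y n := pk (chain_ideal pk n).
have [x [xu xy x_vals]] := row_of_sequence y iota_inj.
have Jsum := row_ideal_direct_summand xu ssp.
have [e [_ ee Je]] := direct_summand_rP (A := full_setRing R) Jsum.
have rJ := right_ideal_row_ideal x.
have yJ n : row_ideal x (y n).
  by exists (vdelta (iota n.+1) 1); [exact: fin_supp_delta | rewrite dotv_delta xy mulr1].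
have [m _ Pe] : (\bigcup_n chain_ideal pk n) e.
  apply: (row_ideal_sub_bigcup (x := x)); [exact: right_ideal_chain | exact: chain_ideal_mono | |].
    move=> k; have [-> | [n ->]] := x_vals k; first by exists 0%N.
    by exists n.+1; exact: chain_ideal_pick.
  by rewrite Je.
have JP : row_ideal x `<=` chain_ideal pk m.
  rewrite Je => z [_ <-]; have [_ PM] := right_ideal_chain pk m; exact: PM.
have -> : I = row_ideal x.
  rewrite (chain_ideal_stationary rI pkI (JP _ (yJ m))).
  by apply/seteqP; split => //; apply: chain_ideal_sub.
exact: Jsum.
Qed.

Theorem theorem2p17 (R : pzRingType) :
  (semisimple_ring R <->
     exists Lambda : choiceType,
       [/\ countable [set: Lambda], infinite_set [set: Lambda] &
           CFM_SSP Lambda R])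
  /\ (semisimple_ring R <->
     exists Lambda : choiceType,
       infinite_set [set: Lambda] /\ CFM_SSP Lambda R)
  /\ (semisimple_ring R <->
     forall Lambda : choiceType,
       infinite_set [set: Lambda] -> CFM_SSP Lambda R).
Proof.
have infN : infinite_set [set: nat] := infinite_nat.
have SSP_semisimple (L : choiceType) :
    infinite_set [set: L] -> CFM_SSP L R -> semisimple_ring R.
  by move=> infL [rSSP _]; exact: CFM_right_SSP_semisimple infL rSSP.
split; [|split]; split.
- move=> Rss; exists nat.
  by split; [exact: countableP | exact: infN | exact: semisimple_CFM_SSP].
- by move=> [L [_ infL H]]; exact: SSP_semisimple infL H.
- by move=> Rss; exists nat; split; [exact: infN | exact: semisimple_CFM_SSP].
- by move=> [L [infL H]]; exact: SSP_semisimple infL H.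
- by move=> Rss L _; exact: semisimple_CFM_SSP.
- by move=> H; exact: SSP_semisimple infN (H nat infN).
Qed.
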